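(* Let $M$ be a complete pointed metric space and $Y$ a real Banach space. If $f \in \mathrm{Lip}_0(M,Y)$ attains its norm toward some vector (i.e. $f \in \mathrm{A}(M,Y)$), then the associated operator $T_f \in \mathcal{L}(\mathcal{F}(M),Y)$ quasi attains its norm (i.e. $T_f \in \mathrm{QNA}(\mathcal{F}(M),Y)$).
   Context: Throughout, metric spaces are complete and pointed, with base point $0$; $Y$ is a real Banach space. $\mathrm{Lip}_0(M,Y)$ is the Banach space of Lipschitz maps $f:M\to Y$ with $f(0)=0$, normed by $\|f\| = \sup_{p\neq q} \|f(p)-f(q)\|/d(p,q)$. A map $f\in \mathrm{Lip}_0(M,Y)$ attains its norm toward $y\in Y$ if there is a sequence $(p_n,q_n)$ in $M\times M$ with $p_n\neq q_n$ such that $[f(p_n)-f(q_n)]/d(p_n,q_n)\to y$ and $\|y\|=\|f\|$; $\mathrm{A}(M,Y)$ is the set of $f$ that attain their norm toward some $y\in Y$. The Lipschitz-free space $\mathcal{F}(M)$ is the closed linear span of the evaluations $\delta(x)$ ($\delta(x)(g)=g(x)$) in $\mathrm{Lip}_0(M,\mathbb{R})^*$; each $f\in\mathrm{Lip}_0(M,Y)$ corresponds to the unique $T_f\in\mathcal{L}(\mathcal{F}(M),Y)$ with $T_f(\delta(x))=f(x)$, and $\|T_f\|=\|f\|$. For Banach spaces $X,Y$, an operator $T\in\mathcal{L}(X,Y)$ quasi attains its norm, written $T\in\mathrm{QNA}(X,Y)$, if there exist a sequence $(x_n)\subset B_X$ and $y_0\in Y$ with $Tx_n\to y_0$ and $\|y_0\|=\|T\|$.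 *)

From HB Require Import structures.
From mathcomp Require Import all_boot all_order all_algebra.
From mathcomp Require Import all_classical all_reals all_analysis.
Set Implicit Arguments. Unset Strict Implicit. Unset Printing Implicit Defensive.
Import Order.TTheory GRing.Theory Num.Theory.
Import numFieldNormedType.Exports.
Local Open Scope classical_set_scope.
Local Open Scope ring_scope.

Section Defs.
Variables (R : realType) (M : Type) (d : M -> M -> R) (x0 : M).

Definition is_metric : Prop :=
  (forall p q, 0 <= d p q) /\ (forall p q, d p q = 0 <-> p = q) /\
  (forall p q, d p q = d q p) /\ (forall p q r, d p r <= d p q + d q r).

Definition metric_complete : Prop :=
  forall u : nat -> M,
    (forall e : R, 0 < e -> exists N : nat, forall m n, (N <= m)%N -> (N <= n)%N ->
        d (u m) (u n) < e) ->
    exists l : M, forall e : R, 0 < e -> exists N : nat, forall n, (N <= n)%N -> d (u n) l < e.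

Variable (Y : normedModType R).

Definition Lip0 (f : M -> Y) : Prop :=
  f x0 = 0 /\ exists L : R, forall p q, `|f p - f q| <= L * d p q.

Definition lipnorm (f : M -> Y) : R :=
  sup [set r | exists p q, p <> q /\ r = `|f p - f q| / d p q].

Definition attains_toward (f : M -> Y) (y : Y) : Prop :=
  exists p q : nat -> M, (forall n, p n <> q n) /\
    (fun n => (d (p n) (q n))^-1 *: (f (p n) - f (q n))) @ \oo --> y /\
    `|y| = lipnorm f.

Definition attains (f : M -> Y) : Prop := exists y : Y, attains_toward f y.
End Defs.

Section Free.
Variables (R : realType) (M : Type) (d : M -> M -> R) (x0 : M).

(* Elements of Lip_0(M,R)^* are represented as functionals on M -> R;
   only their values on Lip_0(M,R) are relevant. *)
Definition functional := (M -> R) -> R.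

Definition lip1 (g : M -> R) : Prop :=
  g x0 = 0 /\ forall p q, `|g p - g q| <= d p q.

Definition delta (x : M) : functional := fun g => g x.

Definition comb (s : seq (R * M)) : functional :=
  fun g => \sum_(c <- s) c.1 * g c.2.

Definition linear_on_Lip0 (phi : functional) : Prop :=
  forall (g h : M -> R) (a b : R), Lip0 d x0 g -> Lip0 d x0 h ->
    phi (fun x => a * g x + b * h x) = a * phi g + b * phi h.

(* phi belongs to F(M): a linear functional on Lip_0(M,R) lying in the
   dual-norm closure of span{delta(x)} *)
Definition inFree (phi : functional) : Prop :=
  linear_on_Lip0 phi /\
  forall e : R, 0 < e -> exists s : seq (R * M),
    forall g, lip1 g -> `|phi g - comb s g| <= e.

Definition in_dual_ball (phi : functional) : Prop :=
  forall g, lip1 g -> `|phi g| <= 1.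

Variable (Y : normedModType R).

Definition bounded_linear_on_Free (T : functional -> Y) : Prop :=
  (forall (phi psi : functional) (a b : R), inFree phi -> inFree psi ->
     T (fun g => a * phi g + b * psi g) = a *: T phi + b *: T psi) /\
  exists C : R, forall phi, inFree phi -> in_dual_ball phi -> `|T phi| <= C.

Definition is_Tf (f : M -> Y) (T : functional -> Y) : Prop :=
  bounded_linear_on_Free T /\ forall x, T (delta x) = f x.

Definition opnorm_Free (T : functional -> Y) : R :=
  sup [set r | exists phi, inFree phi /\ in_dual_ball phi /\ r = `|T phi|].

Definition QNA_Free (T : functional -> Y) : Prop :=
  exists (mu : nat -> functional) (y0 : Y),
    (forall n, inFree (mu n) /\ in_dual_ball (mu n)) /\
    (fun n => T (mu n)) @ \oo --> y0 /\ `|y0| = opnorm_Free T.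
End Free.

From HB Require Import structures.
From mathcomp Require Import all_boot all_order all_algebra.
From mathcomp Require Import all_classical all_reals all_analysis.
From mathcomp Require Import ring lra.
Import Order.TTheory GRing.Theory Num.Theory.
Import numFieldNormedType.Exports.
Local Open Scope ring_scope.

(* A molecule (delta p - delta q) / d p q lies in the unit ball of F(M) and T_f
   sends it to the difference quotient of f at (p, q); hence the difference
   quotients converging to y are the images of a sequence in the unit ball, and
   it remains to see that ||T_f|| = ||f||.  For a finite combination
   mu = sum a_i delta(x_i), the bound ||sum a_i f(x_i)|| <= ||f|| ||mu|| comes from
   a Hahn-Banach functional norming sum a_i f(x_i) on the finite-dimensional span
   of this vector and the f(x_i), composed with f and extended to M by McShane's
   formula.  Every element of F(M) is a limit of such combinations, and T_f is
   bounded, so the bound passes to all of F(M). *)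

Set Implicit Arguments. Unset Strict Implicit. Unset Printing Implicit Defensive.

Section Metric.
Variables (R : realType) (M : Type) (d : M -> M -> R).
Hypothesis dm : is_metric d.

Lemma metric_ge0 p q : 0 <= d p q. Proof. by case: dm. Qed.
Lemma metric_sym p q : d p q = d q p. Proof. by case: dm => _ [_ []]. Qed.
Lemma metric_triangle p q r : d p r <= d p q + d q r.
Proof. by case: dm => _ [_ [_]]. Qed.
Lemma metric_xx p : d p p = 0. Proof. by case: dm => _ [H _]; apply/H. Qed.

Lemma metric_gt0 p q : p <> q -> 0 < d p q.
Proof.
move=> pq; rewrite lt_def metric_ge0 andbT; apply/eqP.
by case: dm => _ [H _] /H.
Qed.

End Metric.

Section DominatedExtension.
Local Open Scope classical_set_scope.
Variables (R : realType) (Y : normedModType R).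
Implicit Types (W : set Y) (phi : Y -> R).

Definition subspace W := W 0 /\ forall (a : R) x y, W x -> W y -> W (a *: x + y).

Definition linear_on W phi :=
  forall (a : R) x y, W x -> W y -> phi (a *: x + y) = a * phi x + phi y.

Definition dominated_linear W phi :=
  [/\ subspace W, linear_on W phi & forall x, W x -> phi x <= `|x|].

Definition add_line W (u : Y) : set Y := [set y | exists w t, W w /\ y = w + t *: u].

Section Subspace.
Variables (W : set Y) (phi : Y -> R).
Hypothesis sW : subspace W.

Lemma subspace0 : W 0. Proof. by case: sW. Qed.

Lemma subspaceZ a x : W x -> W (a *: x).
Proof. by move=> Wx; rewrite -[_ *: x]addr0; apply: sW.2 => //; exact: subspace0. Qed.

Lemma subspaceD x y : W x -> W y -> W (x + y).
Proof. by move=> Wx Wy; rewrite -[x]scale1r; apply: sW.2. Qed.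

Lemma subspaceB x y : W x -> W y -> W (x - y).
Proof. by move=> Wx Wy; apply: subspaceD => //; rewrite -scaleN1r; exact: subspaceZ. Qed.

Lemma subspace_add_line u : subspace (add_line W u).
Proof.
split; first by exists 0, 0; rewrite scale0r addr0; split=> //; exact: subspace0.
move=> a x y [w1 [t1 [W1 ->]]] [w2 [t2 [W2 ->]]].
exists (a *: w1 + w2), (a * t1 + t2); split; first exact: sW.2.
by rewrite scalerDr scalerDl scalerA addrACA.
Qed.

Lemma add_line_l u w : W w -> add_line W u w.
Proof. by move=> Ww; exists w, 0; rewrite scale0r addr0. Qed.

Lemma add_line_r u : add_line W u u.
Proof. by exists 0, 1; rewrite scale1r add0r; split=> //; exact: subspace0. Qed.

Lemma add_line_id u : W u -> add_line W u = W.
Proof.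
move=> Wu; apply/seteqP; split; last by move=> w; exact: add_line_l.
by move=> y [w [t [Ww ->]]]; apply: subspaceD => //; exact: subspaceZ.
Qed.

Hypothesis lin : linear_on W phi.

Lemma linear_on0 : phi 0 = 0.
Proof.
have := lin 1 subspace0 subspace0.
by rewrite scale1r addr0 mul1r -{1}[phi 0]addr0 => /addrI <-.
Qed.

Lemma linear_onZ a x : W x -> phi (a *: x) = a * phi x.
Proof.
by move=> Wx; rewrite -[a *: x]addr0 lin ?linear_on0 ?addr0 //; exact: subspace0.
Qed.

Lemma linear_onD x y : W x -> W y -> phi (x + y) = phi x + phi y.
Proof. by move=> Wx Wy; rewrite -{1}[x]scale1r lin // mul1r. Qed.

Lemma linear_onB x y : W x -> W y -> phi (x - y) = phi x - phi y.
Proof.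
move=> Wx Wy; rewrite -scaleN1r linear_onD ?linear_onZ ?mulN1r //.
exact: subspaceZ.
Qed.

Lemma linear_on_sum (I : Type) (s : seq I) (a : I -> R) (F : I -> Y) :
  all (fun i => F i \in W) s ->
  W (\sum_(i <- s) a i *: F i) /\
  phi (\sum_(i <- s) a i *: F i) = \sum_(i <- s) a i * phi (F i).
Proof.
elim: s => [|i s IH] /=; first by rewrite !big_nil linear_on0; split=> //; exact: subspace0.
move=> /andP[/set_mem WF /IH[Ws phis]]; rewrite !big_cons.
by split; [exact: sW.2 | rewrite lin // phis].
Qed.

End Subspace.

Section OneStepExtension.
Variables (W : set Y) (phi : Y -> R) (u : Y).
Hypothesis dW : dominated_linear W phi.

Let sW : subspace W. Proof. by case: dW. Qed.
Let lin : linear_on W phi. Proof. by case: dW. Qed.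
Let dom x : W x -> phi x <= `|x|. Proof. by case: dW => _ _; apply. Qed.

Lemma dominated_gap w w' : W w -> W w' -> phi w - `|w - u| <= `|w' + u| - phi w'.
Proof.
move=> Ww Ww'; have := dom (subspaceD sW Ww Ww').
rewrite (linear_onD lin) // => le_phi.
have := ler_normD (w - u) (w' + u); rewrite addrACA addNr addr0 => le_norm.
lra.
Qed.

Variable c : R.
Hypotheses (c_lo : forall w, W w -> phi w - `|w - u| <= c)
           (c_hi : forall w, W w -> c <= `|w + u| - phi w).

(* Divide by |t| and use [c_hi] at [w / t] if [t > 0], [c_lo] at [w / (-t)] if [t < 0]. *)
Lemma dominated_add_line w t : W w -> phi w + t * c <= `|w + t *: u|.
Proof.
move=> Ww; have [t0|t0|->] := ltgtP t 0; last by rewrite mul0r scale0r !addr0; exact: dom.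
- have nt0 : 0 < - t by rewrite oppr_gt0.
  have := ler_wpM2l (ltW nt0) (c_lo (subspaceZ sW (- t)^-1 Ww)).
  rewrite (linear_onZ sW lin) // mulrBr mulrA mulfV ?gt_eqF // mul1r.
  rewrite -[X in X * `|_|]gtr0_norm // -normrZ scalerBr scalerA mulfV ?gt_eqF //.
  rewrite scale1r scaleNr opprK; lra.
- have := ler_wpM2l (ltW t0) (c_hi (subspaceZ sW t^-1 Ww)).
  rewrite (linear_onZ sW lin) // mulrBr mulrA mulfV ?gt_eqF // mul1r.
  rewrite -[X in X * `|_|]gtr0_norm // -normrZ scalerDr scalerA mulfV ?gt_eqF //.
  rewrite scale1r; lra.
Qed.

Hypothesis Wu : ~ W u.

Lemma add_line_coord_inj w t w' t' : W w -> W w' ->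
  w + t *: u = w' + t' *: u -> w = w' /\ t = t'.
Proof.
move=> Ww Ww'; have [<- E|tt' E] := eqVneq t t'; first by split=> //; exact: (addIr (t *: u)).
exfalso; apply: Wu.
have Ewu : w - w' = (t' - t) *: u.
  by rewrite scalerBl; apply/eqP; rewrite subr_eq addrC addrA -E addrK.
have -> : u = (t' - t)^-1 *: (w - w').
  by rewrite Ewu scalerA mulVf ?scale1r // subr_eq0 eq_sym.
by apply: subspaceZ sW _ _ _; exact: subspaceB.
Qed.

Lemma extend_dominated_at : exists psi, dominated_linear (add_line W u) psi /\
  forall w t, W w -> psi (w + t *: u) = phi w + t * c.
Proof.
pose coords y := [set wt : Y * R | W wt.1 /\ y = wt.1 + wt.2 *: u].
pose psi y := let wt := xget (0, 0) (coords y) in phi wt.1 + wt.2 * c.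
have psiE w t : W w -> psi (w + t *: u) = phi w + t * c.
  move=> Ww; rewrite /psi (@xget_unique _ (0, 0) _ (w, t)) //.
  by move=> [w' t'] [/= Ww' /(add_line_coord_inj Ww Ww') [-> ->]].
exists psi; split=> //; split.
- exact: subspace_add_line.
- move=> a _ _ [w1 [t1 [W1 ->]]] [w2 [t2 [W2 ->]]].
  rewrite scalerDr addrACA scalerA -scalerDl !psiE //; last exact: sW.2.
  by rewrite lin // mulrDr mulrDl !mulrA; ring.
- by move=> _ [w [t [Ww ->]]]; rewrite psiE //; exact: dominated_add_line.
Qed.

End OneStepExtension.

Lemma extend_dominated W phi u : dominated_linear W phi ->
  exists psi, dominated_linear (add_line W u) psi /\ forall w, W w -> psi w = phi w.
Proof.
move=> dW; have [sW _ _] := dW.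
have [Wu|Wu] := pselect (W u); first by exists phi; rewrite add_line_id.
pose lo := [set phi w - `|w - u| | w in W].
have W0 := subspace0 sW.
have lo_sup : has_sup lo.
  split; first by exists (phi 0 - `|0 - u|), 0.
  by exists (`|0 + u| - phi 0) => _ [w Ww <-]; exact (dominated_gap u dW Ww W0).
have c_lo w : W w -> phi w - `|w - u| <= sup lo.
  by move=> Ww; apply: sup_upper_bound lo_sup _ _; exists w.
have c_hi w : W w -> sup lo <= `|w + u| - phi w.
  by move=> Ww; apply: ge_sup lo_sup.1 _ => _ [w' Ww' <-]; exact (dominated_gap u dW Ww' Ww).
have [psi [dpsi psiE]] := extend_dominated_at dW c_lo c_hi Wu.
exists psi; split=> // w Ww.
by have := psiE w 0 Ww; rewrite scale0r mul0r !addr0.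
Qed.

Lemma norming_functional (I : Type) (F : I -> Y) (s : seq I) v : v != 0 ->
  exists W phi, [/\ dominated_linear W phi, W v, phi v = `|v|
                   & all (fun i => F i \in W) s].
Proof.
move=> v0; elim: s => [|i s [W [phi [dW Wv phiv WF]]]].
  have sW0 : subspace [set 0] by split=> // a _ _ -> ->; rewrite scaler0 addr0.
  have dW0 : dominated_linear [set 0] (fun=> 0).
    by split=> // a x y _ _; rewrite mulr0 addr0.
  have c_lo w : [set 0] w -> 0 - `|w - v| <= `|v|.
    by move=> ->; rewrite !sub0r normrN; have := normr_ge0 v; lra.
  have c_hi w : [set 0] w -> `|v| <= `|w + v| - 0.
    by move=> ->; rewrite add0r subr0.
  have v_notin0 : ~ [set 0] v by move=> v_eq0; rewrite v_eq0 eqxx in v0.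
  have [psi [dpsi psiE]] := extend_dominated_at dW0 c_lo c_hi v_notin0.
  exists (add_line [set 0] v), psi; split=> //; first exact: add_line_r.
  by have := psiE 0 1 erefl; rewrite add0r scale1r mul1r add0r.
have [sW _ _] := dW; have [psi [dpsi psiE]] := extend_dominated (F i) dW.
exists (add_line W (F i)), psi; split=> /=; first exact: dpsi.
- exact: add_line_l.
- by rewrite psiE.
- rewrite (mem_set (add_line_r sW _)) /=; apply: sub_all WF => j /set_mem WFj.
  exact/mem_set/add_line_l.
Qed.

End DominatedExtension.

Section McShane.
Local Open Scope classical_set_scope.
Variables (R : realType) (M : Type) (d : M -> M -> R) (A : set M) (h : M -> R).
Hypotheses (dm : is_metric d) (A0 : A !=set0)
  (h_lip : forall z z', A z -> A z' -> h z - h z' <= d z z').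

Definition mcshane x := inf [set h z + d x z | z in A].

Let mcshane_lbound x : has_lbound [set h z + d x z | z in A].
Proof.
have [a Aa] := A0; exists (h a - d a x) => _ [z Az <-].
have := h_lip Aa Az; have := metric_triangle dm a x z; lra.
Qed.

Lemma mcshane_le x z : A z -> mcshane x <= h z + d x z.
Proof. by move=> Az; apply: ge_inf (mcshane_lbound x) _ _; exists z. Qed.

Lemma mcshane_eq z : A z -> mcshane z = h z.
Proof.
move=> Az; apply/eqP; rewrite eq_le; apply/andP; split.
  by have := mcshane_le z Az; rewrite metric_xx // addr0.
apply: lb_le_inf; first by exists (h z + d z z), z.
by move=> _ [z' Az' <-]; have := h_lip Az Az'; lra.
Qed.

Lemma mcshane_lip p q : `|mcshane p - mcshane q| <= d p q.
Proof.
suff mcshane_lip1 a b : mcshane a - mcshane b <= d a b.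
  by rewrite ler_norml mcshane_lip1 andbT lerNl opprB (metric_sym dm) mcshane_lip1.
suff : mcshane a - d a b <= mcshane b by lra.
apply: lb_le_inf; first by have [z Az] := A0; exists (h z + d b z), z.
move=> _ [z Az <-]; have := mcshane_le a Az; have := metric_triangle dm a b z; lra.
Qed.

End McShane.

Section FreeSpace.
Variables (R : realType) (M : Type) (d : M -> M -> R) (x0 : M).

Lemma inFree_delta x : inFree d x0 (delta x).
Proof.
split=> [g h a b _ _ //|e e0]; exists [:: (1, x)] => g _.
by rewrite /comb big_seq1 /delta mul1r subrr normr0 ltW.
Qed.

Lemma comb_lincomb (a b : R) (s t : seq (R * M)) g :
  comb ([seq (a * c.1, c.2) | c <- s] ++ [seq (b * c.1, c.2) | c <- t]) g =
  a * comb s g + b * comb t g.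
Proof.
rewrite /comb big_cat !big_map !mulr_sumr.
by congr (_ + _); apply: eq_bigr => c _; rewrite mulrA.
Qed.

Lemma inFree_comb s : inFree d x0 (comb s).
Proof.
split=> [g h a b _ _|e e0]; last by exists s => g _; rewrite subrr normr0 ltW.
by rewrite /comb !mulr_sumr -big_split; apply: eq_bigr => c _ /=; ring.
Qed.

Lemma inFree_lincomb (phi psi : functional R M) (a b : R) :
  inFree d x0 phi -> inFree d x0 psi -> inFree d x0 (fun g => a * phi g + b * psi g).
Proof.
move=> [phi_lin phi_approx] [psi_lin psi_approx]; split.
  by move=> g h a' b' Lg Lh; rewrite phi_lin // psi_lin //; ring.
move=> e e0; pose k := `|a| + `|b| + 1.
have k0 : 0 < k by rewrite ltr_wpDl ?addr_ge0.
have [s Hs] := phi_approx _ (divr_gt0 e0 k0).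
have [t Ht] := psi_approx _ (divr_gt0 e0 k0).
exists ([seq (a * c.1, c.2) | c <- s] ++ [seq (b * c.1, c.2) | c <- t]) => g lg.
rewrite comb_lincomb.
have -> : a * phi g + b * psi g - (a * comb s g + b * comb t g) =
          a * (phi g - comb s g) + b * (psi g - comb t g) by ring.
apply: le_trans (ler_normD _ _) _; rewrite !normrM.
have := Hs g lg; have := Ht g lg; have := normr_ge0 a; have := normr_ge0 b.
have : e / k * k = e by rewrite divfK ?gt_eqF.
move: (e / k) (divr_gt0 e0 k0) => e' e'0; rewrite /k; nra.
Qed.

Lemma inFree_scale (phi : functional R M) (a : R) :
  inFree d x0 phi -> inFree d x0 (fun g => a * phi g).
Proof.
move=> Fphi; rewrite (_ : (fun g => _) = fun g => a * phi g + 0 * phi g).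
  exact: inFree_lincomb.
by apply: funext => g; rewrite mul0r addr0.
Qed.

Definition molecule (p q : M) : functional R M :=
  fun g => (d p q)^-1 * delta p g + (- (d p q)^-1) * delta q g.

Lemma inFree_molecule p q : inFree d x0 (molecule p q).
Proof. exact: inFree_lincomb (inFree_delta p) (inFree_delta q). Qed.

Lemma molecule_in_dual_ball p q : is_metric d -> p <> q ->
  in_dual_ball d x0 (molecule p q).
Proof.
move=> dm pq g [_ g_lip]; have dpq := metric_gt0 dm pq.
rewrite /molecule /delta mulNr -mulrBr normrM gtr0_norm ?invr_gt0 //.
by rewrite ler_pdivrMl // mulr1.
Qed.

Section Operator.
Variables (Y : normedModType R) (f : M -> Y) (T : functional R M -> Y).
Hypothesis hT : is_Tf d x0 f T.

Lemma Tf_lincomb (phi psi : functional R M) (a b : R) :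
  inFree d x0 phi -> inFree d x0 psi ->
  T (fun g => a * phi g + b * psi g) = a *: T phi + b *: T psi.
Proof. by case: hT => [[+ _] _]; apply. Qed.

Lemma Tf_scale (phi : functional R M) (a : R) :
  inFree d x0 phi -> T (fun g => a * phi g) = a *: T phi.
Proof.
move=> Fphi; rewrite (_ : (fun g => _) = fun g => a * phi g + 0 * phi g).
  by rewrite Tf_lincomb // scale0r addr0.
by apply: funext => g; rewrite mul0r addr0.
Qed.

Lemma Tf_delta x : T (delta x) = f x.
Proof. by case: hT. Qed.

Lemma Tf_comb (s : seq (R * M)) : T (comb s) = \sum_(c <- s) c.1 *: f c.2.
Proof.
elim: s => [|c s IH].
  have -> : comb [::] = (fun g => 0 * delta x0 g) :> ((M -> R) -> R).
    by apply: funext => g; rewrite /comb big_nil mul0r.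
  by rewrite big_nil (Tf_scale 0 (inFree_delta x0)) scale0r.
have -> : comb (c :: s) = (fun g => c.1 * delta c.2 g + 1 * comb s g) :> ((M -> R) -> R).
  by apply: funext => g; rewrite /comb big_cons mul1r.
by rewrite (Tf_lincomb _ _ (inFree_delta _) (inFree_comb s)) Tf_delta IH scale1r big_cons.
Qed.

Lemma Tf_molecule p q : T (molecule p q) = (d p q)^-1 *: (f p - f q).
Proof.
by rewrite (Tf_lincomb _ _ (inFree_delta p) (inFree_delta q)) !Tf_delta scaleNr scalerBr.
Qed.

Lemma Tf_bounded : exists2 C, 0 <= C & forall (psi : functional R M) e, 0 < e ->
  inFree d x0 psi -> (forall g, lip1 d x0 g -> `|psi g| <= e) -> `|T psi| <= C * e.
Proof.
case: hT => [[_ [C TC]] _]; exists C.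
  apply: le_trans (TC (delta x0) (inFree_delta x0) _); first exact: normr_ge0.
  by move=> g [g0 _]; rewrite /delta g0 normr0.
move=> psi e e0 Fpsi psi_le; have e_inv_ge0 : 0 <= e^-1 by rewrite invr_ge0 ltW.
have ball : in_dual_ball d x0 (fun g => e^-1 * psi g).
  by move=> g lg; rewrite normrM ger0_norm // mulrC ler_pdivrMr // mul1r psi_le.
have := TC _ (inFree_scale e^-1 Fpsi) ball.
by rewrite (Tf_scale _ Fpsi) normrZ ger0_norm // mulrC ler_pdivrMr.
Qed.

End Operator.

End FreeSpace.

Section NormingLipschitz.
Local Open Scope classical_set_scope.
Variables (R : realType) (M : Type) (d : M -> M -> R) (x0 : M).
Variables (Y : normedModType R) (f : M -> Y) (L : R).
Hypotheses (dm : is_metric d) (fx0 : f x0 = 0)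
  (f_lip : forall p q, `|f p - f q| <= L * d p q).

Lemma lip1_norming (s : seq (R * M)) : 0 < L ->
  exists2 g, lip1 d x0 g & comb s g * L = `|\sum_(c <- s) c.1 *: f c.2|.
Proof.
move=> L_gt0; set v := \sum_(c <- s) _.
have [->|v0] := eqVneq v 0.
  exists (fun=> 0); last by rewrite normr0 /comb big1 ?mul0r // => c _; rewrite mulr0.
  by split=> // p q; rewrite subrr normr0 metric_ge0.
have [W [phi [[sW lin dom] Wv phiv WF]]] := norming_functional (fun c => f c.2) s v0.
pose A := [set z | W (f z)]; pose h z := phi (f z) / L.
have Ax0 : A x0 by rewrite /A /= fx0; exact: subspace0.
have A0 : A !=set0 by exists x0.
have h_lip z z' : A z -> A z' -> h z - h z' <= d z z'.
  move=> Az Az'; rewrite -mulrBl ler_pdivrMr // -(linear_onB sW lin) // mulrC.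
  exact: le_trans (dom _ (subspaceB sW Az Az')) (f_lip z z').
pose g := mcshane d A h.
have g_h z : A z -> g z = h z := mcshane_eq dm A0 h_lip (z := z).
exists g.
  split; last exact: mcshane_lip dm A0 h_lip.
  by rewrite g_h // /h fx0 (linear_on0 sW lin) mul0r.
have comb_g t : all (fun c => f c.2 \in W) t ->
    comb t g * L = \sum_(c <- t) c.1 * phi (f c.2).
  rewrite /comb mulr_suml; elim: t => [|c t IH]; first by rewrite !big_nil.
  move=> /= /andP[/set_mem Ac /IH]; rewrite !big_cons => ->.
  by rewrite g_h // /h -mulrA divfK ?gt_eqF.
by rewrite comb_g // -phiv (linear_on_sum sW lin (fun c => c.1) WF).2.
Qed.

Lemma norm_sum_le_lipschitz (s : seq (R * M)) K : 0 <= L ->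
  (forall g, lip1 d x0 g -> `|comb s g| <= K) -> `|\sum_(c <- s) c.1 *: f c.2| <= L * K.
Proof.
move=> L_ge0 comb_le; have [L0|L_gt0] := eqVneq L 0.
  have f0 z : f z = 0.
    by apply/eqP; rewrite -normr_le0 -[f z]subr0 -fx0 (le_trans (f_lip z x0)) // L0 mul0r.
  by rewrite big1 ?normr0 ?L0 ?mul0r // => c _; rewrite f0 scaler0.
have {L_gt0}L_gt0 : 0 < L by rewrite lt_def L_gt0.
have [g lg <-] := lip1_norming s L_gt0.
by rewrite mulrC ler_wpM2l // (le_trans (ler_norm _)) ?comb_le.
Qed.

End NormingLipschitz.

Section LipschitzFreeOperator.
Local Open Scope classical_set_scope.
Variables (R : realType) (M : Type) (d : M -> M -> R) (x0 : M).
Variables (Y : normedModType R) (f : M -> Y) (T : functional R M -> Y).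
Hypotheses (dm : is_metric d) (lipf : Lip0 d x0 f) (hT : is_Tf d x0 f T).

Lemma lipnorm_ge_quotient p q : p <> q -> `|f p - f q| / d p q <= lipnorm d f.
Proof.
move=> pq; apply: sup_upper_bound; last by exists p, q.
split; first by exists (`|f p - f q| / d p q), p, q.
have [_ [L f_lip]] := lipf.
by exists L => _ [a [b [ab ->]]]; rewrite ler_pdivrMr ?metric_gt0.
Qed.

Lemma lipnorm_lipschitz p q : `|f p - f q| <= lipnorm d f * d p q.
Proof.
have [<-|pq] := pselect (p = q); first by rewrite subrr normr0 metric_xx ?mulr0.
by rewrite -ler_pdivrMr ?metric_gt0 //; exact: lipnorm_ge_quotient.
Qed.

Lemma lipnorm_ge0 : 0 <= lipnorm d f.
Proof.
have [[p [q pq]]|no_pair] := pselect (exists p q : M, p <> q).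
  by apply: le_trans (lipnorm_ge_quotient pq); rewrite divr_ge0 ?metric_ge0.
rewrite /lipnorm (_ : [set r | _] = set0) ?sup0 //.
by apply/seteqP; split=> // r [p [q [pq _]]]; apply: no_pair; exists p, q.
Qed.

Lemma Tf_norm_le phi : inFree d x0 phi -> in_dual_ball d x0 phi ->
  `|T phi| <= lipnorm d f.
Proof.
move=> Fphi phi_le1; have [C C0 T_le] := Tf_bounded hT.
set L := lipnorm d f; have L0 : 0 <= L := lipnorm_ge0.
apply/ler_addgt0Pr => e e0; pose k := L + C + 1.
have k0 : 0 < k by rewrite ltr_wpDl ?addr_ge0.
have e'0 := divr_gt0 e0 k0; set e' := e / k in e'0.
have [s comb_near] := Fphi.2 _ e'0.
pose rest := fun g => 1 * phi g + (-1) * comb s g.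
have T_split : T phi = T (comb s) + T rest.
  by rewrite (Tf_lincomb hT _ _ Fphi (inFree_comb d x0 s)) scale1r scaleN1r addrC subrK.
have T_comb : `|T (comb s)| <= L * (1 + e').
  rewrite (Tf_comb hT); apply: (norm_sum_le_lipschitz dm lipf.1 lipnorm_lipschitz) => // g lg.
  have := ler_normD (phi g) (comb s g - phi g); rewrite addrC subrK => /le_trans; apply.
  by rewrite distrC; apply: lerD; [exact: phi_le1 | exact: comb_near].
have T_rest : `|T rest| <= C * e'.
  apply: T_le => //; first exact: inFree_lincomb (inFree_comb d x0 s).
  by move=> g lg; rewrite /rest mul1r mulN1r; exact: comb_near.
rewrite T_split (le_trans (ler_normD _ _)) //.
have : e' * k = e by rewrite divfK ?gt_eqF.
move: T_comb T_rest; rewrite /k; have := ltW e'0; nra.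
Qed.

Lemma opnorm_Tf (p q : M) : p <> q -> opnorm_Free d x0 T = lipnorm d f.
Proof.
move=> pq; rewrite /opnorm_Free; set S := (X in sup X).
have S_sup : has_sup S.
  split.
    exists `|T (molecule d p q)|, (molecule d p q).
    by split; [exact: inFree_molecule | split=> //; exact: molecule_in_dual_ball].
  by exists (lipnorm d f) => _ [phi [Fphi [phi_le1 ->]]]; exact: Tf_norm_le.
apply/eqP; rewrite eq_le; apply/andP; split.
  by apply: ge_sup S_sup.1 _ => _ [phi [Fphi [phi_le1 ->]]]; exact: Tf_norm_le.
apply: ge_sup; first by exists (`|f p - f q| / d p q), p, q.
move=> _ [a [b [ab ->]]]; apply: (sup_upper_bound S_sup).
exists (molecule d a b); split; first exact: inFree_molecule.
split; first exact: molecule_in_dual_ball.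
by rewrite (Tf_molecule hT) normrZ gtr0_norm ?invr_gt0 ?metric_gt0 // mulrC.
Qed.

End LipschitzFreeOperator.

Unset Implicit Arguments.

Theorem lemma2p1 (R : realType) (M : Type) (d : M -> M -> R) (x0 : M)
  (Y : completeNormedModType R) (f : M -> Y) (T : functional R M -> Y) :
  is_metric d -> metric_complete d ->
  Lip0 d x0 f -> attains d f ->
  is_Tf d x0 f T ->
  QNA_Free d x0 T.
Proof.
move=> dm _ lipf [y [p [q [pq [cvg_y norm_y]]]]] hT.
exists (fun n => molecule d (p n) (q n)), y; split.
  by move=> n; split; [exact: inFree_molecule | exact: molecule_in_dual_ball].
split; last by rewrite norm_y (opnorm_Tf dm lipf hT (pq 0%N)).
by under eq_fun do rewrite (Tf_molecule hT).
Qed.
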